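(* Let $\phi=\tilde p/p$ be an irreducible rational inner function on $\mathbb{D}^3$ of degree $(m,n,1)$ with $p(z)=p_1(z_1,z_2)+z_3p_2(z_1,z_2)$. Then there are at most finitely many $(\zeta_1,\zeta_2)\in\mathbb{T}^2$ such that $\mathcal{Z}_p\cap\mathbb{T}^3$ contains the vertical line $\{(\zeta_1,\zeta_2)\}\times\mathbb{T}$.
   Context: A rational inner function (RIF) on $\mathbb{D}^3$ is a rational function holomorphic on the tridisk with unimodular radial limits a.e. on $\mathbb{T}^3$; it is written $\phi=\tilde p/p$ with $p$ zero-free on $\mathbb{D}^3$, $p,\tilde p$ without common factors, $\tilde p(z)=z_1^mz_2^nz_3\overline{p(1/\bar z_1,1/\bar z_2,1/\bar z_3)}$ for degree $(m,n,1)$. Irreducibility gives that $p_1$ and $p_2$ share no common factors. $\mathcal{Z}_p$ is the zero set of $p$. *)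

From HB Require Import structures.
From mathcomp Require Import all_boot all_order all_algebra.
From mathcomp Require Import reals.
From mathcomp Require Import complex.
From mathcomp Require Import mpoly.

Set Implicit Arguments.
Unset Strict Implicit.
Unset Printing Implicit Defensive.

Import Order.TTheory GRing.Theory Num.Theory.
Local Open Scope ring_scope.
Local Open Scope complex_scope.

Definition Cx (R : realType) := R[i].

(* Polynomials in three complex variables z1 z2 z3 (indices 0,1,2). *)
Notation poly3 R := {mpoly (Cx R)[3]}.

Definition ev3 (R : realType) (p : poly3 R) (z1 z2 z3 : Cx R) : Cx R :=
  p.@[fun i : 'I_3 => nth 0 [:: z1; z2; z3] i].

Definition degvar (R : realType) (p : poly3 R) (i : 'I_3) : nat :=
  \max_(d <- msupp p) d i.

Definition has_degree (R : realType) (p : poly3 R) (m n : nat) : Prop :=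
  [/\ degvar p (@inord 2 0) = m, degvar p (@inord 2 1) = n
    & degvar p (@inord 2 2) = 1%N].

(* Reflection p~(z) = z1^m z2^n z3 conj(p(1/conj z1, 1/conj z2, 1/conj z3)),
   written coefficientwise: the coefficient of z^(a,b,c) in p~ is the
   conjugate of the coefficient of z^(m-a,n-b,1-c) in p. *)
Definition reflect_poly (R : realType) (m n : nat) (p : poly3 R) : poly3 R :=
  \sum_(d <- msupp p)
     ((p@_d)^*)%C *: 'X_[ [multinom (nth 0%N [:: m; n; 1%N] i - d i)%N | i < 3] ].

Definition nonconstant (R : realType) (q : poly3 R) : Prop := (1 < msize q)%N.

Definition irreducible3 (R : realType) (p : poly3 R) : Prop :=
  nonconstant p /\
  forall q r : poly3 R, p = q * r -> ~ nonconstant q \/ ~ nonconstant r.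

Definition no_common_factor (R : realType) (p q : poly3 R) : Prop :=
  forall f : poly3 R, (exists a, p = f * a) -> (exists b, q = f * b) ->
    ~ nonconstant f.

Definition in_disk (R : realType) (z : Cx R) : Prop := `|z| < 1.
Definition in_circle (R : realType) (z : Cx R) : Prop := `|z| = 1.

Definition zero_free_tridisk (R : realType) (p : poly3 R) : Prop :=
  forall z1 z2 z3, in_disk z1 -> in_disk z2 -> in_disk z3 -> ev3 p z1 z2 z3 != 0.

(* phi = p~/p is an irreducible rational inner function on D^3 of degree
   (m,n,1): p zero-free on D^3, p of degree (m,n,1), p and p~ without common
   factors, and p irreducible. *)
Definition irreducible_RIF_data (R : realType) (m n : nat) (p : poly3 R) : Prop :=
  [/\ zero_free_tridisk p, has_degree p m n,
      no_common_factor p (reflect_poly m n p) & irreducible3 p].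

From HB Require Import structures.
From mathcomp Require Import all_boot all_order all_algebra.
From mathcomp Require Import reals complex mpoly.
Import GRing.Theory Num.Theory.
Set Implicit Arguments.
Unset Strict Implicit.
Unset Printing Implicit Defensive.
Local Open Scope ring_scope.

(* Write p = F(z1, z2) + z3 G(z1, z2).  Taking z3 = 1 and z3 = -1 shows that
   the vertical line {(x, y)} x T lies in Z_p iff F(x, y) = G(x, y) = 0.
   Since p has degree 1 in z3, G <> 0, and irreducibility of p then forces F
   and G to have no common non-unit factor in C[z1][z2].  Their pseudo-gcd g
   over C[z1] satisfies c F = a g with c(z1) <> 0; cancelling the linear
   factors of c one at a time (a form of Gauss's lemma) turns g into a true
   common factor of the same z2-degree, so g is a nonzero r(z1) and
   r = u F + v G.  Common zeros therefore lie over the finitely many roots a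
   of r, and over each of them F(a, .) and G(a, .) are not both zero, since
   otherwise z1 - a would divide F and G. *)

(* P : {poly {poly K}} is read as P(x, y) with x the inner variable. *)
Local Notation evalx x := (map_poly (horner_eval x)).

Lemma vanishing_poly_eq0 (R : numDomainType) (q : {poly R}) :
  (forall y, q.[y] = 0) -> q = 0.
Proof.
move=> q0; apply: (@roots_geq_poly_eq0 _ q [seq i%:R | i <- iota 0 (size q)]).
- by apply/allP => y _; apply/rootP.
- by rewrite map_inj_uniq ?iota_uniq // => i j /eqP; rewrite eqr_nat => /eqP.
- by rewrite size_map size_iota.
Qed.

Lemma vanishing_poly2_eq0 (R : numDomainType) (P : {poly {poly R}}) :
  (forall x y, (evalx x P).[y] = 0) -> P = 0.
Proof.
move=> P0; apply/polyP => i; rewrite coef0; apply: vanishing_poly_eq0 => x.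
rewrite -[_.[x]]/(horner_eval x P`_i) -coef_map.
by rewrite (vanishing_poly_eq0 (P0 x)) coef0.
Qed.

Lemma bigmaxn_seq_attained (I : eqType) (s : seq I) (F : I -> nat) :
  (0 < \max_(i <- s) F i)%N ->
  exists2 i, i \in s & F i = (\max_(i <- s) F i)%N.
Proof.
elim: s => [|j s IH]; first by rewrite big_nil.
rewrite big_cons.
case: (leqP (F j) (\max_(i <- s) F i)%N) => [_ /IH [i si Fi] | _ _].
  by exists i; rewrite ?in_cons ?si ?orbT.
by exists j; rewrite ?mem_head.
Qed.

Lemma circle_affine_eq0 (R : numDomainType) (f g : R) :
  (forall z : R, `|z| = 1 -> f + z * g = 0) -> f = 0 /\ g = 0.
Proof.
move=> fg0; have f0 : f = 0.
  have : (f + 1 * g) + (f + -1 * g) = f *+ 2.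
    by rewrite mul1r mulN1r addrACA subrr addr0 mulr2n.
  rewrite !fg0 ?normr1 ?normrN1 // addr0 => /esym/eqP.
  by rewrite mulrn_eq0 => /eqP.
by split=> //; move: (fg0 1 (normr1 _)); rewrite f0 add0r mul1r.
Qed.

Lemma finite_pairs_of_finite_fibers (T U : eqType) (P : T -> U -> Prop)
    (xs : seq T) :
  (forall x, exists ys : seq U, forall y, P x y -> y \in ys) ->
  exists s : seq (T * U), forall x y, x \in xs -> P x y -> (x, y) \in s.
Proof.
move=> fibers; elim: xs => [|x0 xs [s Hs]]; first by exists [::].
have [ys Hys] := fibers x0.
exists ([seq (x0, y) | y <- ys] ++ s) => x y; rewrite in_cons mem_cat.
case/predU1P => [-> | xxs] Pxy; first by rewrite map_f ?Hys.
by rewrite Hs ?orbT.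
Qed.

Lemma mpolyX3E (R : ringType) (m : 'X_{1..3}) :
  'X_[m] = 'X_0 ^+ m 0 * 'X_1 ^+ m 1 * 'X_2 ^+ m 2 :> {mpoly R[3]}.
Proof.
rewrite mpolyXE_id !big_ord_recr big_ord0 /= mul1r.
by congr ('X_ _ ^+ m _ * 'X_ _ ^+ m _ * 'X_ _ ^+ m _); apply/val_inj.
Qed.

Section ClosedFieldBivariate.
Variable K : closedFieldType.

Definition coprime_poly2 (F G : {poly {poly K}}) : Prop :=
  forall D a b, F = D * a -> G = D * b -> D \is a GRing.unit.

Lemma poly_roots_finite (q : {poly K}) :
  q != 0 -> exists rs : seq K, forall x, root q x -> x \in rs.
Proof.
move=> q0; have [rs ->] := closed_field_poly_normal q; exists rs => x.
by rewrite rootZ ?lead_coef_eq0 // root_prod_XsubC.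
Qed.

Lemma evalx_eq0_factor (P : {poly {poly K}}) a :
  evalx a P = 0 -> exists Q, P = ('X - a%:P)%:P * Q.
Proof.
move=> Pa0; exists (map_poly (fun q => q %/ ('X - a%:P)) P).
apply/polyP => i; rewrite coefCM coef_map_id0 ?div0p // mulrC divpK //.
by rewrite dvdp_XsubCl /root -[_.[a]]/(horner_eval a P`_i) -coef_map Pa0 coef0.
Qed.

Lemma cancel_scalar_factor (c : {poly K}) (F a g : {poly {poly K}}) :
    c != 0 -> c%:P * F = a * g ->
  exists (h : {poly K}) (a' g' : {poly {poly K}}),
    [/\ g = h%:P * g', size g' = size g & F = a' * g'].
Proof.
(* A root al of c makes z1 - al divide a or g, and it can be cancelled. *)
have [n] := ubnP (size c); elim: n => // n IH in c F a g *.
rewrite ltnS => sc c0 e.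
have [c_const | c_nonconst] := leqP (size c) 1.
  have c00 : c`_0 != 0 by rewrite -polyC_eq0 -size1_polyC.
  rewrite (size1_polyC c_const) in e.
  exists 1, (((c`_0)^-1)%:P%:P * a), g; split; rewrite ?mul1r //.
  by rewrite -mulrA -e mulrA -!polyCM mulVf ?mul1r.
have [al ral] : exists al, root c al by apply/closed_rootP; rewrite gtn_eqF.
set d := 'X - al%:P; have d0 : d != 0 by rewrite polyXsubC_eq0.
have ce : c = (c %/ d) * d by rewrite divpK // dvdp_XsubCl.
have c'0 : c %/ d != 0.
  by apply: contra c0 => /eqP c'0; rewrite ce c'0 mul0r.
have sc' : (size (c %/ d)%R < n)%N.
  apply: leq_trans _ sc.
  by rewrite [in X in (_ < X)%N]ce size_mul // size_XsubC addn2.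
have cancel_d : injective (fun X : {poly {poly K}} => d%:P * X).
  by apply: mulfI; rewrite polyC_eq0.
have : evalx al a * evalx al g = 0.
  rewrite -rmorphM -e rmorphM /= map_polyC /= horner_evalE.
  by rewrite (rootP ral) mul0r.
move/eqP; rewrite mulf_eq0 => /orP [] /eqP /evalx_eq0_factor [Q eQ].
- apply: (IH (c %/ d) F Q g) => //; apply: cancel_d.
  by rewrite /= mulrA -polyCM [d * _]mulrC -ce e eQ mulrA.
- have [h [a' [g' [eQh sg' ->]]]] : exists h a' g',
      [/\ Q = h%:P * g', size g' = size Q & F = a' * g'].
    apply: (IH (c %/ d) F a Q) => //; apply: cancel_d.
    by rewrite /= mulrA -polyCM [d * _]mulrC -ce e eQ mulrCA.
  exists (d * h), a', g'; split => //.
    by rewrite eQ eQh polyCM -mulrA.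
  by rewrite sg' eQ eQh [RHS]size_Cmul.
Qed.

Lemma common_divisor_size_gcdp (F G : {poly {poly K}}) :
  exists D a b : {poly {poly K}},
    [/\ size D = size (gcdp F G), F = D * a & G = D * b].
Proof.
have [[c1 a] /= c10 e1] := Pdiv.Idomain.dvdpP _ _ (dvdp_gcdl F G).
have [[c2 b] /= c20 e2] := Pdiv.Idomain.dvdpP _ _ (dvdp_gcdr F G).
rewrite -mul_polyC in e1; rewrite -mul_polyC in e2.
have [h1 [a1 [g1 [eg sg1 eF]]]] := cancel_scalar_factor c10 e1.
rewrite eg mulrA in e2.
have [h2 [b2 [g2 [eg1 sg2 eG]]]] := cancel_scalar_factor c20 e2.
exists g2, (a1 * h2%:P), b2; split.
- by rewrite sg2 sg1.
- by rewrite eF eg1 mulrA mulrC.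
- by rewrite eG mulrC.
Qed.

Lemma gcdp_size1_bezout (F G : {poly {poly K}}) : size (gcdp F G) = 1%N ->
  exists (r : {poly K}) (u v : {poly {poly K}}), r != 0 /\ r%:P = u * F + v * G.
Proof.
move=> sg; have sg1 : (size (gcdp F G) <= 1)%N by rewrite sg.
have g00 : (gcdp F G)`_0 != 0.
  by rewrite -polyC_eq0 -(size1_polyC sg1) -size_poly_eq0 sg.
have /eqpP [[k1 k2] /= /andP [k10 k20] e] := egcdpE F G.
exists (k1 * (gcdp F G)`_0), (k2%:P * (egcdp F G).1), (k2%:P * (egcdp F G).2).
split; first by rewrite mulf_neq0.
by rewrite polyCM -(size1_polyC sg1) mul_polyC e -mul_polyC mulrDr !mulrA.
Qed.

Lemma coprime_poly2_fiber_zeros_finite (F G : {poly {poly K}}) x :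
    coprime_poly2 F G ->
  exists ys : seq K,
    forall y, (evalx x F).[y] = 0 -> (evalx x G).[y] = 0 -> y \in ys.
Proof.
move=> FG; have [Fx0 | Fx0] := eqVneq (evalx x F) 0; last first.
  by have [ys Hys] := poly_roots_finite Fx0; exists ys => y /rootP /Hys.
have [Gx0 | Gx0] := eqVneq (evalx x G) 0; last first.
  by have [ys Hys] := poly_roots_finite Gx0; exists ys => y _ /rootP /Hys.
have [F' eF] := evalx_eq0_factor Fx0; have [G' eG] := evalx_eq0_factor Gx0.
move: (FG _ _ _ eF eG).
by rewrite poly_unitE coefC /= poly_unitE size_XsubC andbF.
Qed.

Lemma coprime_poly2_common_zeros_finite (F G : {poly {poly K}}) :
    coprime_poly2 F G ->
  exists s : seq (K * K), forall x y,
    (evalx x F).[y] = 0 -> (evalx x G).[y] = 0 -> (x, y) \in s.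
Proof.
move=> FG; have sg : size (gcdp F G) = 1%N.
  have [D [a [b [<- eF eG]]]] := common_divisor_size_gcdp F G.
  by move: (FG D a b eF eG); rewrite poly_unitE => /andP [/eqP].
have [r [u [v [r0 e]]]] := gcdp_size1_bezout sg.
have [xs Hxs] := poly_roots_finite r0.
have fibers x : exists ys : seq K,
    forall y, (evalx x F).[y] = 0 /\ (evalx x G).[y] = 0 -> y \in ys.
  have [ys Hys] := coprime_poly2_fiber_zeros_finite x FG.
  by exists ys => y [/Hys].
have [s Hs] := finite_pairs_of_finite_fibers xs fibers.
exists s => x y Fxy Gxy; apply: Hs => //; apply/Hxs/rootP.
have := congr1 (fun P => (evalx x P).[y]) e.
rewrite /= map_polyC hornerC /= horner_evalE => ->.
by rewrite rmorphD !rmorphM /= hornerD !hornerM Fxy Gxy !mulr0 addr0.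
Qed.

End ClosedFieldBivariate.

Section Trivariate.
Variable K : numClosedFieldType.
Implicit Types (p : {mpoly K[3]}) (m : 'X_{1..3}).

Local Notation pt x y z := (fun i : 'I_3 => nth 0 [:: x; y; z] i).

Definition mpoly_of_poly2 : {poly {poly K}} -> {mpoly K[3]} :=
  horner_eval 'X_(1 : 'I_3) \o
    map_poly (horner_eval 'X_(0 : 'I_3) \o map_poly (@mpolyC 3 K)).

HB.instance Definition _ := GRing.RMorphism.on mpoly_of_poly2.

Lemma meval_mpoly_of_poly2 (v : 'I_3 -> K) (P : {poly {poly K}}) :
  (mpoly_of_poly2 P).@[v] = (evalx (v 0) P).[v 1].
Proof.
rewrite /mpoly_of_poly2 /= horner_evalE -horner_map /= mevalXU -map_poly_comp.
congr (_.[_]); apply: eq_map_poly => q /=.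
rewrite horner_evalE -horner_map /= mevalXU -map_poly_comp horner_evalE.
by rewrite (@eq_map_poly _ _ _ idfun) ?map_poly_id // => c /=; rewrite mevalC.
Qed.

Lemma mpoly_of_poly2_eqC (P : {poly {poly K}}) c :
  mpoly_of_poly2 P = c%:MP -> P = c%:P%:P.
Proof.
move=> Pc; apply/eqP; rewrite -subr_eq0; apply/eqP/vanishing_poly2_eq0 => x y.
have := congr1 (meval (pt x y 0)) Pc.
rewrite meval_mpoly_of_poly2 mevalC /= => Pxy.
rewrite rmorphB /= !map_polyC /= hornerD hornerN !hornerC horner_evalE.
by rewrite hornerC Pxy subrr.
Qed.

Lemma affine_z3_constant_slope0 (P Q : {poly {poly K}}) c :
  mpoly_of_poly2 P + 'X_2 * mpoly_of_poly2 Q = c%:MP -> Q = 0.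
Proof.
move=> PQc; apply: vanishing_poly2_eq0 => x y.
have e0 := congr1 (meval (pt x y 0)) PQc.
have e1 := congr1 (meval (pt x y 1)) PQc.
rewrite !mevalD !mevalM !mevalXU !meval_mpoly_of_poly2 !mevalC /= in e0 e1.
by move: e1; rewrite -e0 mul0r addr0 mul1r -{2}[(evalx x P).[y]]addr0 => /addrI.
Qed.

Lemma mpoly_of_poly2_monomial (c : K) i j :
  mpoly_of_poly2 (c%:P%:P * ('X^i)%:P * 'X^j) = c *: ('X_0 ^+ i * 'X_1 ^+ j).
Proof.
rewrite !rmorphM /= /mpoly_of_poly2 /= !map_polyC /= !horner_evalE !hornerC.
rewrite map_polyXn hornerXn !map_polyC !map_polyXn /= hornerC hornerXn.
by rewrite -mul_mpolyC mulrA.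
Qed.

Definition zcoef (p : {mpoly K[3]}) (k : nat) : {poly {poly K}} :=
  \sum_(m <- msupp p | m 2 == k) (p@_m)%:P%:P * ('X^(m 0))%:P * 'X^(m 1).

Lemma zcoefE p k :
  mpoly_of_poly2 (zcoef p k) * 'X_2 ^+ k =
  \sum_(m <- msupp p | m 2 == k) p@_m *: 'X_[m].
Proof.
rewrite rmorph_sum mulr_suml; apply: eq_bigr => m /eqP <-.
by rewrite /= mpoly_of_poly2_monomial -scalerAl (mpolyX3E _ m).
Qed.

Lemma mpoly_z3_affine p : (forall m, m \in msupp p -> (m 2%R <= 1)%N) ->
  p = mpoly_of_poly2 (zcoef p 0) + 'X_2 * mpoly_of_poly2 (zcoef p 1).
Proof.
move=> le1; have := zcoefE p 0; have := zcoefE p 1; rewrite expr0 expr1 mulr1.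
rewrite mulrC => -> ->; rewrite {1}(mpolyE p).
rewrite (bigID (fun m => m 2 == 0%N)) /=; congr (_ + _).
rewrite big_seq_cond [RHS]big_seq_cond; apply: eq_bigl => m.
by case: (boolP (m \in msupp p)) => //= /le1; case: (m 2) => [|[|]].
Qed.

Lemma zcoef_neq0 p k m : m \in msupp p -> m 2 = k -> zcoef p k != 0.
Proof.
move=> mp mk; apply: contraTneq mp => zk0; rewrite mcoeff_msupp negbK.
have := congr1 (mcoeff m) (mpolyE p).
rewrite (bigID (fun m' : 'X_{1..3} => m' 2 == k)) /= -zcoefE zk0 rmorph0 mul0r.
rewrite add0r raddf_sum /= => ->; rewrite big1 // => m' m'k.
rewrite mcoeffZ mcoeffX; case: eqP => [em | _]; last by rewrite mulr0.
by move: m'k; rewrite em mk eqxx.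
Qed.

Lemma irreducible_coprime_poly2 (F G : {poly {poly K}}) : G != 0 ->
    (forall q r, mpoly_of_poly2 F + 'X_2 * mpoly_of_poly2 G = q * r ->
       ~ (1 < msize q)%N \/ ~ (1 < msize r)%N) ->
  coprime_poly2 F G.
Proof.
move=> G0 irr D a b eF eG.
have [|/negP|/negP] :=
  irr (mpoly_of_poly2 D) (mpoly_of_poly2 a + 'X_2 * mpoly_of_poly2 b).
- by rewrite eF eG !rmorphM mulrDr mulrCA.
- rewrite -leqNgt => /msize1_polyC /mpoly_of_poly2_eqC eD.
  have c0 : (mpoly_of_poly2 D)@_0 != 0.
    by apply: contraNneq G0 => c0; rewrite eG eD c0 mul0r.
  rewrite eD poly_unitE size_polyC coefC polyC_eq0 c0 /=.
  by rewrite poly_unitE size_polyC coefC c0 /= unitfE.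
- rewrite -leqNgt => /msize1_polyC /affine_z3_constant_slope0 b0.
  by rewrite eG b0 mulr0 eqxx in G0.
Qed.

Lemma vertical_lines_finite p :
    (forall m, m \in msupp p -> (m 2%R <= 1)%N) ->
    (exists2 m, m \in msupp p & m 2%R = 1%N) ->
    (forall q r, p = q * r -> ~ (1 < msize q)%N \/ ~ (1 < msize r)%N) ->
  exists s : seq (K * K), forall x y,
    (forall z : K, `|z| = 1 -> p.@[pt x y z] = 0) -> (x, y) \in s.
Proof.
move=> le1 [m mp m1] irr; have ep := mpoly_z3_affine le1.
have FG : coprime_poly2 (zcoef p 0) (zcoef p 1).
  by apply: irreducible_coprime_poly2 (zcoef_neq0 mp m1) _; rewrite -ep.
have [s Hs] := coprime_poly2_common_zeros_finite FG.
exists s => x y line.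
have [Fxy Gxy] :
    (evalx x (zcoef p 0)).[y] = 0 /\ (evalx x (zcoef p 1)).[y] = 0.
  apply: circle_affine_eq0 => z /line.
  by rewrite {1}ep mevalD mevalM mevalXU !meval_mpoly_of_poly2.
exact: Hs.
Qed.

End Trivariate.

Theorem lemma3p4 (R : realType) (m n : nat) (p : {mpoly (Cx R)[3]}) :
  irreducible_RIF_data m n p ->
  exists s : seq (Cx R * Cx R),
    forall zeta1 zeta2 : Cx R,
      in_circle zeta1 -> in_circle zeta2 ->
      (forall zeta3 : Cx R, in_circle zeta3 -> ev3 p zeta1 zeta2 zeta3 = 0) ->
      (zeta1, zeta2) \in s.
Proof.
move=> [_ [_ _ deg3] _ [_ irr]].
have e2 : @inord 2 2 = 2%R :> 'I_3 by apply/val_inj; rewrite /= inordK.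
rewrite /degvar e2 in deg3.
have le1 m' : m' \in msupp p -> (m' 2%R <= 1)%N.
  by move=> m'p; rewrite -[X in (_ <= X)%N]deg3; apply: leq_bigmax_seq.
have [m' m'p] :
    exists2 m', m' \in msupp p & m' 2%R = (\max_(d <- msupp p) d 2%R)%N.
  by apply: bigmaxn_seq_attained; rewrite deg3.
rewrite deg3 => m'1.
have [s Hs] := vertical_lines_finite le1 (ex_intro2 _ _ m' m'p m'1) irr.
by exists s => z1 z2 _ _ line; apply: Hs.
Qed.
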